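(* Let $\mathcal{C}$ be an isoclinism class of finite-dimensional Lie superalgebras (over a field of characteristic different from $2,3$). Then every $L\in\mathcal{C}$ can be expressed as a direct sum $L=T\oplus A$, where $T$ is a stem Lie superalgebra and $A$ is a finite-dimensional abelian Lie superalgebra.
   Context: Lie superalgebras: $\mathbb{Z}_2$-graded algebras with graded skew-symmetric bracket satisfying the graded Jacobi identity; homomorphisms are even. $Z(L)$ is the center, $L'=[L,L]$; $L$ is stem if $Z(L)\subseteq L'$; abelian means $[L,L]=0$. Two Lie superalgebras $L,M$ are isoclinic if there are isomorphisms $\varphi:L/Z(L)\to M/Z(M)$, $\theta:L'\to M'$ with $\theta([l,m])=[k,r]$ whenever $k+Z(M)=\varphi(l+Z(L))$, $r+Z(M)=\varphi(m+Z(L))$; isoclinism is an equivalence relation whose classes are the isoclinism classes (families). *)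

(* A finite-dimensional Lie superalgebra over a field F is
   modelled as a finite-dimensional F-vector space V (vectType), together with
   a Z_2-grading V = V0 (+) V1 (two subspaces) and a bracket br : V -> V -> V
   that is bilinear, even (respects the grading), graded skew-symmetric and
   satisfies the graded Jacobi identity.  Parities are booleans
   (false = even, true = odd); addition of parities is xor. *)
From HB Require Import structures.
From mathcomp Require Import all_boot all_order all_algebra.
Set Implicit Arguments.
Unset Strict Implicit.
Unset Printing Implicit Defensive.
Import GRing.Theory.
Local Open Scope ring_scope.

Section LieSuper.
Variables (F : fieldType) (V : vectType F).

Definition hcomp (V0 V1 : {vspace V}) (b : bool) : {vspace V} :=
  if b then V1 else V0.

Definition psign (i j : bool) : F := (-1) ^+ (i && j).

Definition is_lie_super (V0 V1 : {vspace V}) (br : V -> V -> V) : Prop :=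
  [/\
      (V0 + V1 = fullv)%VS /\ (V0 :&: V1 = 0)%VS,
      (forall (a : F) (x y z : V), br (a *: x + y) z = a *: br x z + br y z) /\
      (forall (a : F) (x y z : V), br x (a *: y + z) = a *: br x y + br x z),
      (forall (i j : bool) (x y : V), x \in hcomp V0 V1 i -> y \in hcomp V0 V1 j ->
          br x y \in hcomp V0 V1 (i (+) j)),
      (forall (i j : bool) (x y : V), x \in hcomp V0 V1 i -> y \in hcomp V0 V1 j ->
          br x y = - (psign i j *: br y x)) &
      (forall (i j k : bool) (x y z : V),
          x \in hcomp V0 V1 i -> y \in hcomp V0 V1 j -> z \in hcomp V0 V1 k ->
          psign i k *: br x (br y z) + psign j i *: br y (br z x)
            + psign k j *: br z (br x y) = 0)].

Definition graded_subspace (V0 V1 W : {vspace V}) : Prop :=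
  (W = (W :&: V0) + (W :&: V1))%VS.

Definition graded_ideal (V0 V1 : {vspace V}) (br : V -> V -> V) (W : {vspace V}) : Prop :=
  graded_subspace V0 V1 W /\ (forall x y : V, y \in W -> br x y \in W).

Definition in_derived (br : V -> V -> V) (W : {vspace V}) (x : V) : Prop :=
  exists (n : nat) (a : 'I_n -> F) (u w : 'I_n -> V),
    (forall i, u i \in W /\ w i \in W) /\ x = \sum_(i < n) a i *: br (u i) (w i).

Definition in_center (br : V -> V -> V) (W : {vspace V}) (x : V) : Prop :=
  x \in W /\ (forall y : V, y \in W -> br x y = 0).

Definition stem (br : V -> V -> V) (W : {vspace V}) : Prop :=
  forall x : V, in_center br W x -> in_derived br W x.

Definition abelian_sub (br : V -> V -> V) (W : {vspace V}) : Prop :=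
  forall x y : V, x \in W -> y \in W -> br x y = 0.

End LieSuper.

(* Let Z be the centre and D = [L, L] the derived algebra.  Both are graded
   because the bracket is even, so one can choose a graded complement A of
   Z :&: D in Z, and then a graded complement T of A in L containing D.  Then
   L = T (+) A, A is central (hence an abelian ideal) and T is an ideal since it
   contains D.  As A is central, D = [T, T]; an element of the centre of T is
   central in L, so it lies in Z = A (+) (Z :&: D), and being in T it lies in D:
   T is stem. *)

From HB Require Import structures.
From mathcomp Require Import all_boot all_order all_algebra.
Import GRing.Theory.
Local Open Scope ring_scope.

Set Implicit Arguments.
Unset Strict Implicit.
Unset Printing Implicit Defensive.

Section Complement.

Variables (F : fieldType) (V : vectType F).
Implicit Types U W X : {vspace V}.

Definition compl_ext W U X : {vspace V} := (X + (W :\: (U + X)))%VS.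

Lemma sub_compl_ext W U X : (X <= compl_ext W U X)%VS.
Proof. exact: addvSl. Qed.

Lemma compl_ext_subv W U X : (X <= W)%VS -> (compl_ext W U X <= W)%VS.
Proof. by move=> sXW; rewrite subv_add sXW diffvSl. Qed.

Lemma addv_compl_ext W U X : (U + X <= W)%VS -> (U + compl_ext W U X = W)%VS.
Proof. by move=> sUXW; rewrite addvA addvC addv_diff; apply/addv_idPl. Qed.

Lemma capv_compl_ext W U X : (U :&: X = 0)%VS -> (U :&: compl_ext W U X = 0)%VS.
Proof.
move=> UX0; apply/eqP; rewrite -subv0; apply/subvP => u /memv_capP [uU].
move=> /memv_addP [x xX [c cW uE]].
have c0 : c = 0.
  apply/eqP; rewrite -memv0 -(capv_diff W (U + X)) memv_cap cW /=.
  have -> : c = u - x by rewrite uE addrC addKr.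
  by rewrite memv_add ?memvN.
by rewrite -UX0 memv_cap uU uE c0 addr0.
Qed.

End Complement.

Section GradedSpace.

Variables (F : fieldType) (V : vectType F) (V0 V1 : {vspace V}).
Hypotheses (V0_add_V1 : (V0 + V1 = fullv)%VS) (V0_cap_V1 : (V0 :&: V1 = 0)%VS).

Local Notation Vb := (hcomp V0 V1).
Local Notation gsum X := (X false + X true)%VS.

Lemma hcompN_eq0 b x : x \in Vb b -> x \in Vb (~~ b) -> x = 0.
Proof.
move=> xb xnb; apply/eqP; rewrite -memv0 -V0_cap_V1 memv_cap.
by case: b xb xnb => /= -> ->.
Qed.

Lemma hcomp_addN_eq0 b x y : x \in Vb b -> y \in Vb (~~ b) -> x + y = 0 -> x = 0.
Proof.
move=> xb ynb /eqP; rewrite addr_eq0 => /eqP xE.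
by apply: (hcompN_eq0 xb); rewrite xE memvN.
Qed.

Lemma hcomp_add_inj x0 x1 y0 y1 : x0 \in V0 -> x1 \in V1 -> y0 \in V0 -> y1 \in V1 ->
  x0 + x1 = y0 + y1 -> x0 = y0 /\ x1 = y1.
Proof.
move=> x0V x1V y0V y1V xyE.
have e0 : x0 = y0.
  apply/eqP; rewrite -subr_eq0; apply/eqP/(@hcomp_addN_eq0 false _ (x1 - y1)).
  - exact: memvB.
  - exact: memvB.
  - by rewrite addrACA -opprD xyE subrr.
by split=> //; apply: (addrI x0); rewrite {2}e0.
Qed.

Lemma subv_gsum (X : bool -> {vspace V}) b : (X b <= gsum X)%VS.
Proof. by case: b; [exact: addvSr | exact: addvSl]. Qed.

Lemma graded_subspace_le (W : {vspace V}) :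
  (W <= (W :&: V0) + (W :&: V1))%VS -> graded_subspace V0 V1 W.
Proof. by move=> sW; apply/eqP; rewrite eqEsubv sW subv_add !capvSl. Qed.

Lemma graded_subspace_proj0 (W : {vspace V}) :
  (forall x0 x1, x0 \in V0 -> x1 \in V1 -> x0 + x1 \in W -> x0 \in W) ->
  graded_subspace V0 V1 W.
Proof.
move=> W_proj0; apply/graded_subspace_le/subvP => x xW.
have /memv_addP [x0 x0V [x1 x1V xE]] : x \in (V0 + V1)%VS by rewrite V0_add_V1 memvf.
have x0W : x0 \in W by apply: (W_proj0 x0 x1); rewrite -?xE.
have x1W : x1 \in W by rewrite (_ : x1 = x - x0) ?memvB // xE addrC addKr.
by rewrite xE memv_add // memv_cap ?x0W ?x1W.
Qed.

Lemma graded_fullv : graded_subspace V0 V1 fullv.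
Proof. by rewrite /graded_subspace !capfv V0_add_V1. Qed.

Lemma graded_ind (W : {vspace V}) (P : V -> Prop) :
  graded_subspace V0 V1 W -> (forall x y, P x -> P y -> P (x + y)) ->
  (forall b x, x \in (W :&: Vb b)%VS -> P x) -> forall x, x \in W -> P x.
Proof.
move=> Wgr PD Phom x; rewrite Wgr => /memv_addP [x0 x0W [x1 x1W ->]].
by apply: PD; [apply: (Phom false) | apply: (Phom true)].
Qed.

Lemma hcomp_ind (P : V -> Prop) :
  (forall x y, P x -> P y -> P (x + y)) -> (forall b x, x \in Vb b -> P x) ->
  forall x, P x.
Proof.
move=> PD Phom x; apply: (graded_ind graded_fullv PD _ (memvf x)) => b y.
by rewrite capfv; apply: Phom.
Qed.

Lemma graded_gsum (X : bool -> {vspace V}) :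
  (forall b, (X b <= Vb b)%VS) -> graded_subspace V0 V1 (gsum X).
Proof.
move=> XV; apply/graded_subspace_le/addvS; rewrite subv_cap subv_gsum;
  [exact: (XV false) | exact: (XV true)].
Qed.

Lemma gsum_cap_eq0 (X Y : bool -> {vspace V}) :
  (forall b, (X b <= Vb b)%VS) -> (forall b, (Y b <= Vb b)%VS) ->
  (forall b, (X b :&: Y b = 0)%VS) -> (gsum X :&: gsum Y = 0)%VS.
Proof.
move=> XV YV XY0; apply/eqP; rewrite -subv0; apply/subvP => z /memv_capP [].
move=> /memv_addP [x0 x0X [x1 x1X ->]] /memv_addP [y0 y0Y [y1 y1Y]].
have XVb b v : v \in X b -> v \in Vb b by move/(subvP (XV b)).
have YVb b v : v \in Y b -> v \in Vb b by move/(subvP (YV b)).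
case/(hcomp_add_inj (XVb false _ x0X) (XVb true _ x1X) (YVb false _ y0Y) (YVb true _ y1Y)).
move=> e0 e1; have v0 b v : v \in X b -> v \in Y b -> v = 0.
  by move=> vX vY; apply/eqP; rewrite -memv0 -(XY0 b) memv_cap vX.
have -> : x0 = 0 by apply: (v0 false) => //; rewrite e0.
have -> : x1 = 0 by apply: (v0 true) => //; rewrite e1.
by rewrite addr0 mem0v.
Qed.

End GradedSpace.

Section Bracket.

Variables (F : fieldType) (V : vectType F) (br : V -> V -> V).
Hypothesis br_linearl : forall a x y z, br (a *: x + y) z = a *: br x z + br y z.
Hypothesis br_linearr : forall a x y z, br x (a *: y + z) = a *: br x y + br x z.

Lemma br0l z : br 0 z = 0.
Proof.
have brE := br_linearl 1 0 0 z; rewrite scale1r !addr0 scale1r in brE.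
by apply: (@addrI _ (br 0 z)); rewrite addr0 -brE.
Qed.

Lemma br0r z : br z 0 = 0.
Proof.
have brE := br_linearr 1 z 0 0; rewrite scale1r !addr0 scale1r in brE.
by apply: (@addrI _ (br z 0)); rewrite addr0 -brE.
Qed.

Lemma brDl x y z : br (x + y) z = br x z + br y z.
Proof. by rewrite -[x]scale1r br_linearl !scale1r. Qed.

Lemma brDr x y z : br z (x + y) = br z x + br z y.
Proof. by rewrite -[x]scale1r br_linearr !scale1r. Qed.

Lemma brZl a x z : br (a *: x) z = a *: br x z.
Proof. by rewrite -[a *: x]addr0 br_linearl br0l addr0. Qed.

Lemma brZr a x z : br z (a *: x) = a *: br z x.
Proof. by rewrite -[a *: x]addr0 br_linearr br0r addr0. Qed.

Lemma br_suml I r (P : pred I) (f : I -> V) z :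
  br (\sum_(i <- r | P i) f i) z = \sum_(i <- r | P i) br (f i) z.
Proof. exact: (big_morph (br^~ z) (fun x y => brDl x y z) (br0l z)). Qed.

Lemma br_sumr I r (P : pred I) (f : I -> V) z :
  br z (\sum_(i <- r | P i) f i) = \sum_(i <- r | P i) br z (f i).
Proof. exact: (big_morph (br z) (fun x y => brDr x y z) (br0r z)). Qed.

Definition ad x : 'Hom(V, V) := linfun (br x).

Lemma adE u v : ad u v = br u v.
Proof.
pose bruL : {linear V -> V} :=
  HB.pack (br u) (GRing.isLinear.Build F V V *:%R (br u) (fun a => br_linearr a u)).
exact: (lfunE bruL).
Qed.

Lemma ad_linear : linear ad.
Proof.
by move=> a x y; apply/lfunP => z; rewrite add_lfunE scale_lfunE !adE br_linearl.
Qed.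

Definition center_space : {vspace V} := lker (linfun ad).

Lemma center_spaceP x : reflect (forall y, br x y = 0) (x \in center_space).
Proof.
pose adL : {linear V -> 'Hom(V, V)} :=
  HB.pack ad (GRing.isLinear.Build F V 'Hom(V, V) *:%R ad ad_linear).
rewrite memv_ker (lfunE adL) /=; apply: (iffP eqP) => [ad0 y | brx0].
  by rewrite -adE ad0 zero_lfunE.
by apply/lfunP => y; rewrite adE zero_lfunE.
Qed.

Definition bracket_pairs (W : {vspace V}) : seq (V * V) :=
  [seq (u, w) | u <- vbasis W, w <- vbasis W].

Definition derived_space (W : {vspace V}) : {vspace V} :=
  <<[seq br p.1 p.2 | p <- bracket_pairs W]>>%VS.

Lemma mem_derived_space (W : {vspace V}) u w :
  u \in W -> w \in W -> br u w \in derived_space W.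
Proof.
move=> uW wW; rewrite (coord_vbasis uW) br_suml; apply: memv_suml => i _.
rewrite brZl; apply: memvZ; rewrite (coord_vbasis wW) br_sumr.
apply: memv_suml => j _; rewrite brZr; apply/memvZ/memv_span.
apply/mapP; exists ((vbasis W)`_i, (vbasis W)`_j) => //.
by apply: allpairs_f; apply: mem_nth; rewrite size_tuple.
Qed.

Lemma derived_space_in_derived (W : {vspace V}) x :
  x \in derived_space W -> in_derived br W x.
Proof.
set ps := bracket_pairs W; set s := [seq br p.1 p.2 | p <- ps] => xD.
have sz : size s = size ps by rewrite size_map.
exists (size s), (fun i => coord (in_tuple s) i x),
  (fun i => (nth (0, 0) ps i).1), (fun i => (nth (0, 0) ps i).2); split.
  move=> i; have /allpairsP [[u w] [/= uW wW ->]] : nth (0, 0) ps i \in ps.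
    by rewrite mem_nth // -sz.
  by split; apply: vbasis_mem.
rewrite {1}(coord_span (xD : x \in <<in_tuple s>>%VS)); apply: eq_bigr => i _.
by rewrite /= (nth_map (0, 0)) // -sz.
Qed.

Lemma derived_space_addv_central (T A : {vspace V}) :
  (forall a y, a \in A -> br a y = 0 /\ br y a = 0) ->
  (derived_space (T + A) <= derived_space T)%VS.
Proof.
move=> Acentral; apply/span_subvP => _ /mapP [_ /allpairsP [[u w] [/= uTA wTA ->]] ->] /=.
move: (vbasis_mem uTA) (vbasis_mem wTA) => /memv_addP [t tT [a aA ->]].
move=> /memv_addP [t' t'T [a' a'A ->]].
rewrite brDl !brDr (Acentral a t' aA).1 (Acentral a a' aA).1 (Acentral a' t a'A).2.
by rewrite !(addr0, add0r) mem_derived_space.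
Qed.

End Bracket.

Section GradedBracket.

Variables (F : fieldType) (V : vectType F) (V0 V1 : {vspace V}) (br : V -> V -> V).

Local Notation Vb := (hcomp V0 V1).

Hypotheses (V0_add_V1 : (V0 + V1 = fullv)%VS) (V0_cap_V1 : (V0 :&: V1 = 0)%VS).
Hypothesis br_linearl : forall a x y z, br (a *: x + y) z = a *: br x z + br y z.
Hypothesis br_linearr : forall a x y z, br x (a *: y + z) = a *: br x y + br x z.
Hypothesis br_even : forall i j x y, x \in Vb i -> y \in Vb j -> br x y \in Vb (i (+) j).
Hypothesis br_skew : forall i j x y, x \in Vb i -> y \in Vb j ->
  br x y = - (psign F i j *: br y x).

Local Notation Z := (center_space br).
Local Notation D := (derived_space br fullv).
Local Notation centerP := (center_spaceP br_linearl br_linearr).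

Lemma graded_center : graded_subspace V0 V1 Z.
Proof.
apply: graded_subspace_proj0 => // x0 x1 x0V x1V /centerP xZ; apply/centerP.
apply: (hcomp_ind V0_add_V1) => [y y' x0y0 x0y'0 | j y yV].
  by rewrite brDr // x0y0 x0y'0 addr0.
apply: (hcomp_addN_eq0 V0_cap_V1 (@br_even false j _ _ x0V yV) (@br_even true j _ _ x1V yV)).
by rewrite -brDl ?xZ.
Qed.

Lemma br_center_r x y : x \in Z -> br y x = 0.
Proof.
move: x; apply: (graded_ind graded_center) => [x x' xZ x'Z | i x].
  by rewrite brDr ?xZ ?x'Z ?addr0.
rewrite memv_cap => /andP [/centerP xZ xV].
move: y; apply: (hcomp_ind V0_add_V1) => [y y' yx0 y'x0 | j y yV].
  by rewrite brDl // yx0 y'x0 addr0.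
by rewrite (br_skew yV xV) xZ scaler0 oppr0.
Qed.

Lemma graded_derived (W : {vspace V}) :
  graded_subspace V0 V1 W -> graded_subspace V0 V1 (derived_space br W).
Proof.
move=> Wgr; apply: graded_subspace_le; set G := (_ + _)%VS.
have brG : forall u, u \in W -> forall w, w \in W -> br u w \in G.
  apply: (graded_ind Wgr) => [u u' IHu IHu' w wW | i u].
    by rewrite brDl ?memvD ?IHu ?IHu'.
  rewrite memv_cap => /andP [uW uV]; apply: (graded_ind Wgr) => [w w' | j w].
    by rewrite brDr //; apply: memvD.
  rewrite memv_cap => /andP [wW wV].
  have Dij : br u w \in (derived_space br W :&: Vb (i (+) j))%VS.
    by rewrite memv_cap mem_derived_space ?br_even.
  exact: (subvP (subv_gsum (fun b => derived_space br W :&: Vb b)%VS (i (+) j)) _ Dij).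
apply/span_subvP => _ /mapP [_ /allpairsP [[u w] [/= uW wW ->]] ->] /=.
by apply: brG; apply: vbasis_mem.
Qed.

Definition abelian_part b : {vspace V} := ((Z :&: Vb b) :\: D)%VS.
Definition stem_part b : {vspace V} := compl_ext (Vb b) (abelian_part b) (D :&: Vb b).
Definition abelian_factor : {vspace V} := (abelian_part false + abelian_part true)%VS.
Definition stem_factor : {vspace V} := (stem_part false + stem_part true)%VS.

Lemma abelian_part_center b : (abelian_part b <= Z)%VS.
Proof. exact: subv_trans (diffvSl _ _) (capvSl _ _). Qed.

Lemma abelian_part_hcomp b : (abelian_part b <= Vb b)%VS.
Proof. exact: subv_trans (diffvSl _ _) (capvSr _ _). Qed.

Lemma stem_part_hcomp b : (stem_part b <= Vb b)%VS.
Proof. exact/compl_ext_subv/capvSr. Qed.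

Lemma addv_stem_abelian_part b : (stem_part b + abelian_part b = Vb b)%VS.
Proof.
by rewrite addvC addv_compl_ext // subv_add abelian_part_hcomp capvSr.
Qed.

Lemma capv_stem_abelian_part b : (stem_part b :&: abelian_part b = 0)%VS.
Proof.
rewrite capvC capv_compl_ext //; apply/eqP; rewrite -subv0 -(capv_diff (Z :&: Vb b) D).
by rewrite capvA; apply: capvSl.
Qed.

Lemma abelian_factor_center : (abelian_factor <= Z)%VS.
Proof. by rewrite subv_add !abelian_part_center. Qed.

Lemma derived_sub_stem_factor : (D <= stem_factor)%VS.
Proof.
rewrite (graded_derived (graded_fullv V0_add_V1)).
by apply: addvS; apply: sub_compl_ext.
Qed.

Lemma center_sub_abelian_derived : (Z <= abelian_factor + D)%VS.
Proof.
rewrite graded_center.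
have Zb b : (Z :&: Vb b <= abelian_factor + D)%VS.
  rewrite -(addv_diff_cap (Z :&: Vb b) D) addvS ?capvSr //.
  exact: (subv_gsum abelian_part b).
by rewrite subv_add (Zb false) (Zb true).
Qed.

Lemma addv_stem_abelian : (stem_factor + abelian_factor = fullv)%VS.
Proof.
have VbSA b : (Vb b <= stem_factor + abelian_factor)%VS.
  by rewrite -addv_stem_abelian_part addvS ?subv_gsum.
by apply/eqP; rewrite eqEsubv subvf -V0_add_V1 subv_add (VbSA false) (VbSA true).
Qed.

Lemma capv_stem_abelian : (stem_factor :&: abelian_factor = 0)%VS.
Proof.
exact: (gsum_cap_eq0 V0_cap_V1 stem_part_hcomp abelian_part_hcomp capv_stem_abelian_part).
Qed.

Lemma stem_factor_ideal : graded_ideal V0 V1 br stem_factor.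
Proof.
split; first exact: (graded_gsum stem_part_hcomp).
move=> x y _; apply: (subvP derived_sub_stem_factor).
by apply: mem_derived_space; rewrite ?memvf.
Qed.

Lemma abelian_factor_ideal : graded_ideal V0 V1 br abelian_factor.
Proof.
split; first exact: (graded_gsum abelian_part_hcomp).
by move=> x y yA; rewrite br_center_r ?mem0v ?(subvP abelian_factor_center).
Qed.

Lemma abelian_factor_abelian : abelian_sub br abelian_factor.
Proof. by move=> x y /(subvP abelian_factor_center) /centerP. Qed.

Lemma stem_factor_stem : stem br stem_factor.
Proof.
move=> x [xT xTcentral].
have Acentral a y : a \in abelian_factor -> br a y = 0 /\ br y a = 0.
  by move=> /(subvP abelian_factor_center) aZ; split; [apply/centerP | apply: br_center_r].
have xZ : x \in Z.
  apply/centerP => y; have : y \in fullv by rewrite memvf.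
  rewrite -addv_stem_abelian => /memv_addP [t tT [a aA ->]].
  by rewrite brDr // xTcentral // (Acentral a x aA).2 addr0.
have xD : x \in D.
  have /memv_addP [a aA [d dD xE]] := subvP center_sub_abelian_derived x xZ.
  suff a0 : a = 0 by rewrite xE a0 add0r.
  apply/eqP; rewrite -memv0 -capv_stem_abelian memv_cap aA andbT.
  have -> : a = x - d by rewrite xE addrK.
  by rewrite memvB //; apply: (subvP derived_sub_stem_factor).
have DT := derived_space_addv_central br_linearl br_linearr stem_factor Acentral.
by rewrite addv_stem_abelian in DT; apply/derived_space_in_derived/(subvP DT).
Qed.

End GradedBracket.

Theorem theorem3p7 (F : fieldType) (V : vectType F) (V0 V1 : {vspace V})
    (br : V -> V -> V) :
  (2%:R : F) != 0 -> (3%:R : F) != 0 ->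
  is_lie_super V0 V1 br ->
  exists T A : {vspace V},
    [/\ graded_ideal V0 V1 br T, graded_ideal V0 V1 br A,
        (T + A = fullv)%VS, (T :&: A = 0)%VS &
        stem br T /\ abelian_sub br A].
Proof.
move=> _ _ [[V0_add_V1 V0_cap_V1] [br_linearl br_linearr] br_even br_skew _].
exists (stem_factor V0 V1 br), (abelian_factor V0 V1 br); split.
- by apply: stem_factor_ideal.
- by apply: abelian_factor_ideal.
- by apply: addv_stem_abelian.
- by apply: capv_stem_abelian.
- by split; [apply: stem_factor_stem | apply: abelian_factor_abelian].
Qed.
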